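(* Let $W$ be any channel in the support of $\mathcal{W}_{Q,\varepsilon}$, let $n\ge1$, and let $r\ge 0$. If $\mathcal{R}^{(0)}_{W,n}\ge r$, then the graph $G_{W,n}$ has a bipartite independent set of size at least $$2^{rn}-2^{rn/2}\left((1+2^q)^n-2^{nq}\right).$$
   Context: Fix an integer $q\ge1$, $Q=2^q$, $[Q]=\{1,\dots,Q\}$, and a symbol $\phi\notin[Q]$. A channel is a function $W=(W_1,W_2)$ with $W_i:[Q]^2\to[Q]\cup\{\phi\}$. For block length $n$, $W^{(n)}_i(x,y)=(W_i(x_1,y_1),\dots,W_i(x_n,y_n))$ for $x,y\in[Q]^n$. A zero-error code of block length $n$ with message sets $[M_1],[M_2]$ consists of encoders $E_i:[M_i]\to[Q]^n$ and decoders $D_i:([Q]\cup\{\phi\})^n\to[M_i]$ with $D_i(W^{(n)}_i(E_1(m_1),E_2(m_2)))=m_i$ for $i=1,2$ and all $(m_1,m_2)\in[M_1]\times[M_2]$. $\mathcal{R}^{(0)}_{W,n}$ is the supremum of $R_1+R_2$ over rate pairs for which a zero-error code of block length $n$ with $M_i=2^{R_in}$ (positive integers) exists. $\mathcal{W}_{Q,\varepsilon}$ is the distribution over channels in which, independently for every $(x,y)\in[Q]^2$, $W(x,y)=(\phi,\phi)$ with probability $\varepsilon$ and $W(x,y)=(x,y)$ otherwise. $G_{W,n}$ is the bipartite graph whose two sides are two copies of $[Q]^n$, with $x^{(n)}$ (left) adjacent to $y^{(n)}$ (right) iff there is an index $i$ with $W(x_i,y_i)=(\phi,\phi)$. In a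 bipartite graph with sides $X,Y$, a bipartite independent set (BPIS) is a pair $(A,B)$ with $A\subseteq X$, $B\subseteq Y$ and no edge between $A$ and $B$; its size is $|A|\cdot|B|$. Logarithms are base 2. *)

From Stdlib Require Import Reals.
From mathcomp Require Import all_boot.
Set Implicit Arguments. Unset Strict Implicit. Unset Printing Implicit Defensive.

(* Input alphabet [Q] with Q = 2^q, represented 0-based as 'I_(2^q). *)
Notation sym q := ('I_(2 ^ q)).
(* Output alphabet [Q] ∪ {phi}: None plays the role of phi. *)
Notation osym q := (option 'I_(2 ^ q)).

Definition channel (q : nat) := sym q -> sym q -> osym q * osym q.

(* Support of W_{Q,eps}: each (x,y) independently is erased to (phi,phi)
   (probability eps) or transmitted as (x,y) (probability 1 - eps). *)
Definition in_support (q : nat) (eps : R) (W : channel q) : Prop :=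
  forall x y : sym q,
    (W x y = (None, None) /\ Rlt 0 eps) \/
    (W x y = (Some x, Some y) /\ Rlt eps 1).

Definition word (q n : nat) := {ffun 'I_n -> sym q}.
Definition oword (q n : nat) := {ffun 'I_n -> osym q}.

Definition Wn1 q n (W : channel q) (x y : word q n) : oword q n :=
  [ffun i => (W (x i) (y i)).1].
Definition Wn2 q n (W : channel q) (x y : word q n) : oword q n :=
  [ffun i => (W (x i) (y i)).2].

Definition zero_error_code q (W : channel q) (n M1 M2 : nat) : Prop :=
  exists (E1 : 'I_M1 -> word q n) (E2 : 'I_M2 -> word q n)
         (D1 : oword q n -> 'I_M1) (D2 : oword q n -> 'I_M2),
    forall (m1 : 'I_M1) (m2 : 'I_M2),
      D1 (Wn1 W (E1 m1) (E2 m2)) = m1 /\ D2 (Wn2 W (E1 m1) (E2 m2)) = m2.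

Definition achievable_pair q (W : channel q) (n : nat) (R1 R2 : R) : Prop :=
  exists M1 M2 : nat, (0 < M1)%N /\ (0 < M2)%N /\
    INR M1 = Rpower 2 (R1 * INR n) /\ INR M2 = Rpower 2 (R2 * INR n) /\
    zero_error_code W n M1 M2.

(* The set of sum-rates R1 + R2 of achievable pairs; R^{(0)}_{W,n} is its
   supremum. *)
Definition sum_rates q (W : channel q) (n : nat) (s : R) : Prop :=
  exists R1 R2, achievable_pair W n R1 R2 /\ s = Rplus R1 R2.

Definition G_adj q n (W : channel q) (x y : word q n) : Prop :=
  exists i : 'I_n, W (x i) (y i) = (None, None).

(* Bipartite independent set (A,B) of G_{W,n}; its size is #|A| * #|B|. *)
Definition is_BPIS q n (W : channel q) (A B : {set word q n}) : Prop :=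
  forall x y, x \in A -> y \in B -> ~ G_adj W x y.

(* Let e be the number of output words containing at least one erasure;
   e <= (1+Q)^n - Q^n, since unerased words are exactly the images of [Q]^n.
   Take a zero-error code with message sets of sizes M1, M2.  Call a first
   message "bad" if its codeword is adjacent in G_{W,n} to some second
   codeword.  The decoder D1 recovers a bad message from an erased output
   word, so there are at most e bad first messages; removing them gives a
   BPIS of size >= (M1 - e) M2, and symmetrically >= M1 (M2 - e).  Removing
   on the larger side loses at most e * min(M1,M2).

   On the rate side, sum-rates of codes correspond to products M1 M2 via
   2^{(R1+R2) n} = M1 M2; these products are bounded, so some code has the
   maximal product P, and then 2^{R0 n} <= P for the supremum R0.  An
   elementary real inequality, with t = 2^{rn/2}, t^2 <= P, converts the
   loss e * min(M1,M2) into the loss t * ((1+Q)^n - Q^n) of the statement. *)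
From Stdlib Require Import Reals Lra Classical.
From mathcomp Require Import all_boot zify.
Set Implicit Arguments. Unset Strict Implicit.

Section Combinatorics.
Local Open Scope nat_scope.

Definition erased q n := [set w : oword q n | [exists i, w i == None]].

(* Unerased output words are the injective images of the input words. *)
Lemma card_erased q n : #|erased q n| + 2 ^ (n * q) <= (1 + 2 ^ q) ^ n.
Proof.
have total := cardsC (erased q n).
rewrite card_ffun card_option !card_ord in total.
pose lift_word (w : word q n) : oword q n := [ffun i => Some (w i)].
have lift_inj : injective lift_word.
  by move=> x y /ffunP E; apply/ffunP=> i; have := E i; rewrite !ffunE => -[].
have lift_unerased : lift_word @: [set: word q n] \subset ~: erased q n.
  by apply/subsetP=> _ /imsetP [x _ ->]; rewrite !inE; apply/existsPn=> i; rewrite ffunE.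
have := subset_leq_card lift_unerased.
rewrite card_imset // cardsT card_ffun !card_ord -expnM mulnC => unerased.
by rewrite add1n -total leq_add2l.
Qed.

(* Messages i whose transmission together with some j can be erased are few:
   the decoder maps erasure-carrying outputs onto all of them. *)
Lemma card_bad_messages (I J O : finType) (out : I -> J -> O) (dec : O -> I)
    (adj : I -> J -> bool) (S : {set O}) :
  (forall i j, dec (out i j) = i) -> (forall i j, adj i j -> out i j \in S) ->
  #|[set i | [exists j, adj i j]]| <= #|S|.
Proof.
move=> decK adjS; apply: (leq_trans _ (leq_imset_card dec S)).
apply/subset_leq_card/subsetP=> i; rewrite inE => /existsP [j ij].
by apply/imsetP; exists (out i j); rewrite ?decK ?adjS.
Qed.

Section Code.
Variables (q n M1 M2 : nat) (W : channel q).
Variables (E1 : 'I_M1 -> word q n) (E2 : 'I_M2 -> word q n).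
Variables (D1 : oword q n -> 'I_M1) (D2 : oword q n -> 'I_M2).
Hypothesis decodes : forall m1 m2,
  D1 (Wn1 W (E1 m1) (E2 m2)) = m1 /\ D2 (Wn2 W (E1 m1) (E2 m2)) = m2.

Let collide m1 m2 := [exists i, W (E1 m1 i) (E2 m2 i) == (None, None)].

Lemma collide_erased1 m1 m2 : collide m1 m2 -> Wn1 W (E1 m1) (E2 m2) \in erased q n.
Proof. by case/existsP=> i /eqP Wi; rewrite inE; apply/existsP; exists i; rewrite ffunE Wi. Qed.

Lemma collide_erased2 m1 m2 : collide m1 m2 -> Wn2 W (E1 m1) (E2 m2) \in erased q n.
Proof. by case/existsP=> i /eqP Wi; rewrite inE; apply/existsP; exists i; rewrite ffunE Wi. Qed.

Lemma encoder1_inj : 0 < M2 -> injective E1.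
Proof.
move=> M2_gt0; pose m2 := Ordinal M2_gt0.
by apply: (can_inj (g := fun w => D1 (Wn1 W w (E2 m2)))) => m1; case: (decodes m1 m2).
Qed.

Lemma encoder2_inj : 0 < M1 -> injective E2.
Proof.
move=> M1_gt0; pose m1 := Ordinal M1_gt0.
by apply: (can_inj (g := fun w => D2 (Wn2 W (E1 m1) w))) => m2; case: (decodes m1 m2).
Qed.

Lemma bpis_drop_first : 0 < M1 -> 0 < M2 ->
  exists A B : {set word q n}, is_BPIS W A B /\
    M1 * M2 <= #|A| * #|B| + #|erased q n| * M2.
Proof.
move=> M1_gt0 M2_gt0; set bad := [set m1 | [exists m2, collide m1 m2]].
exists (E1 @: ~: bad), (E2 @: [set: 'I_M2]); split.
  move=> _ _ /imsetP [m1 good ->] /imsetP [m2 _ ->] [i Wi].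
  by move: good; rewrite !inE => /existsPn /(_ m2) /existsPn /(_ i); rewrite Wi eqxx.
have few_bad : #|bad| <= #|erased q n|.
  apply: (card_bad_messages (out := fun m1 m2 => Wn1 W (E1 m1) (E2 m2)) (dec := D1)).
    by move=> m1 m2; case: (decodes m1 m2).
  exact: collide_erased1.
have := cardsC bad.
rewrite !card_imset ?cardsT ?card_ord; [|exact: encoder2_inj|exact: encoder1_inj].
by rewrite -mulnDl leq_pmul2r //; lia.
Qed.

Lemma bpis_drop_second : 0 < M1 -> 0 < M2 ->
  exists A B : {set word q n}, is_BPIS W A B /\
    M1 * M2 <= #|A| * #|B| + #|erased q n| * M1.
Proof.
move=> M1_gt0 M2_gt0; set bad := [set m2 | [exists m1, collide m1 m2]].
exists (E1 @: [set: 'I_M1]), (E2 @: ~: bad); split.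
  move=> _ _ /imsetP [m1 _ ->] /imsetP [m2 good ->] [i Wi].
  by move: good; rewrite !inE => /existsPn /(_ m1) /existsPn /(_ i); rewrite Wi eqxx.
have few_bad : #|bad| <= #|erased q n|.
  apply: (card_bad_messages (out := fun m2 m1 => Wn2 W (E1 m1) (E2 m2)) (dec := D2)
           (adj := fun m2 m1 => collide m1 m2)).
    by move=> m2 m1; case: (decodes m1 m2).
  by move=> m2 m1; apply: collide_erased2.
have := cardsC bad.
rewrite !card_imset ?cardsT ?card_ord; [|exact: encoder2_inj|exact: encoder1_inj].
by rewrite (mulnC #|erased q n|) -mulnDr leq_pmul2l //; lia.
Qed.

End Code.

Lemma code_bpis q (W : channel q) n M1 M2 :
  0 < M1 -> 0 < M2 -> zero_error_code W n M1 M2 ->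
  exists A B : {set word q n}, is_BPIS W A B /\
    M1 * M2 <= #|A| * #|B| + #|erased q n| * minn M1 M2.
Proof.
move=> M1_gt0 M2_gt0 [E1 [E2 [D1 [D2 decodes]]]].
case: leqP => [le12 | lt21].
- exact: bpis_drop_second decodes M1_gt0 M2_gt0.
- exact: bpis_drop_first decodes M1_gt0 M2_gt0.
Qed.

Lemma code_size_bound q (W : channel q) n M1 M2 :
  0 < M1 -> 0 < M2 -> zero_error_code W n M1 M2 ->
  M1 * M2 <= #|word q n| * #|word q n|.
Proof.
move=> M1_gt0 M2_gt0 [E1 [E2 [D1 [D2 decodes]]]].
have := leq_card E1 (encoder1_inj decodes M2_gt0).
have := leq_card E2 (encoder2_inj decodes M1_gt0).
by rewrite !card_ord => le2 le1; apply: leq_mul.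
Qed.

Lemma bounded_max (P : nat -> Prop) B :
  (exists k, P k) -> (forall k, P k -> k <= B) ->
  exists m, P m /\ forall k, P k -> k <= m.
Proof.
elim: B => [|B IH] [k Pk] bounded.
  by exists k; split=> // j Pj; have := bounded _ Pj; have := bounded _ Pk; lia.
have [PB | notPB] := classic (P B.+1); first by exists B.+1.
apply: IH; first by exists k.
move=> j Pj; have := bounded _ Pj; rewrite leq_eqVlt => /orP [/eqP Ej | //].
by move: Pj; rewrite Ej.
Qed.

End Combinatorics.

Local Open Scope R_scope.

Lemma lub_inhabited (E : R -> Prop) (l : R) : is_lub E l -> exists s, E s.
Proof.
move=> [_ least]; apply: NNPP => empty.
have : l <= l - 1 by apply: least => s Es; case: empty; exists s.
lra.
Qed.

Lemma sum_rate_code q (W : channel q) n s : sum_rates W n s ->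
  exists M1 M2, (0 < M1)%N /\ (0 < M2)%N /\ zero_error_code W n M1 M2 /\
    Rpower 2 (s * INR n) = INR (M1 * M2).
Proof.
move=> [R1 [R2 [[M1 [M2 [M1_gt0 [M2_gt0 [rate1 [rate2 code]]]]]] ->]]].
exists M1, M2; do 3! split=> //.
by rewrite mult_INR rate1 rate2 -Rpower_plus Rmult_plus_distr_r.
Qed.

Lemma Rpower_lub_le (E : R -> Prop) (l c P : R) :
  0 < c -> 0 < P -> is_lub E l -> (forall s, E s -> Rpower 2 (s * c) <= P) ->
  Rpower 2 (l * c) <= P.
Proof.
move=> c_gt0 P_gt0 [_ least] below.
have ln2_gt0 : 0 < ln 2 by rewrite -ln_1; apply: ln_increasing; lra.
set u := ln P / (ln 2 * c).
have Pu : Rpower 2 (u * c) = P.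
  by rewrite /Rpower /u -[X in _ = X]exp_ln //; f_equal; field; lra.
rewrite -Pu; apply: Rle_Rpower; first lra.
apply: Rmult_le_compat_r; first lra.
apply: least => s Es; apply: Rnot_lt_le => lt_us.
have : Rpower 2 (u * c) < Rpower 2 (s * c).
  by apply: Rpower_lt; [lra | apply: Rmult_lt_compat_r].
by have := below s Es; lra.
Qed.

(* A code of maximal product M1 M2 (which exists since products are bounded)
   dominates the supremum R0 of the sum-rates: 2^{R0 n} <= M1 M2. *)
Lemma best_code q (W : channel q) n R0 : (1 <= n)%N -> is_lub (sum_rates W n) R0 ->
  exists M1 M2, (0 < M1)%N /\ (0 < M2)%N /\ zero_error_code W n M1 M2 /\
    Rpower 2 (R0 * INR n) <= INR (M1 * M2).
Proof.
move=> n_ge1 lub.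
pose product p := exists M1 M2, (0 < M1)%N /\ (0 < M2)%N /\
  zero_error_code W n M1 M2 /\ p = (M1 * M2)%N.
have [p [[M1 [M2 [M1_gt0 [M2_gt0 [code ->]]]]] maximal]] :
    exists p, product p /\ forall k, product k -> (k <= p)%N.
  apply: (bounded_max (B := (#|word q n| * #|word q n|)%N)).
    have [s /sum_rate_code [M1 [M2 [? [? [? _]]]]]] := lub_inhabited lub.
    by exists (M1 * M2)%N, M1, M2.
  move=> _ [M1 [M2 [M1_gt0 [M2_gt0 [code ->]]]]].
  exact: code_size_bound code.
exists M1, M2; do 3! split=> //.
apply: (Rpower_lub_le _ _ lub).
- by apply: lt_0_INR; apply/ltP.
- by rewrite mult_INR; apply: Rmult_lt_0_compat; apply: lt_0_INR; apply/ltP.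
move=> s /sum_rate_code [N1 [N2 [N1_gt0 [N2_gt0 [codeN ->]]]]].
by apply: le_INR; apply/leP; apply: maximal; exists N1, N2.
Qed.

Lemma square_loss (t m M e K S : R) :
  0 <= t -> 0 <= m <= M -> 0 <= e <= K -> t * t <= m * M -> 0 <= S ->
  m * M <= S + e * m -> t * t - t * K <= S.
Proof.
move=> t_ge0 [m_ge0 mM] [e_ge0 eK] ttmM S_ge0 loss.
have [tK | Kt] := Rlt_le_dec t K; first nra.
have [mt | tm] := Rle_lt_dec m t; nra.
Qed.

Theorem proposition1 (q : nat) (eps : R) (W : channel q) (n : nat) (r R0 : R) :
  (1 <= q)%N -> 0 <= eps <= 1 -> in_support eps W ->
  (1 <= n)%N -> 0 <= r ->
  is_lub (sum_rates W n) R0 -> r <= R0 ->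
  exists A B : {set word q n}, is_BPIS W A B /\
    Rpower 2 (r * INR n)
      - Rpower 2 (r * INR n / 2) * (INR ((1 + 2 ^ q) ^ n)%N - INR (2 ^ (n * q))%N)
    <= INR (#|A| * #|B|)%N.
Proof.
move=> _ _ _ n_ge1 r_ge0 lub rR0.
have [M1 [M2 [M1_gt0 [M2_gt0 [code large]]]]] := best_code n_ge1 lub.
have [A [B [bpis size]]] := code_bpis M1_gt0 M2_gt0 code.
exists A, B; split => //.
(* With t = 2^{rn/2}: t^2 = 2^{rn} <= 2^{R0 n} <= M1 M2 and e <= (1+Q)^n - Q^n. *)
set t := Rpower 2 (r * INR n / 2).
have t_ge0 : 0 <= t by apply: Rlt_le; apply: exp_pos.
have t_square : t * t <= INR M1 * INR M2.
  rewrite -Rpower_plus -mult_INR; apply: Rle_trans large; apply: Rle_Rpower; first lra.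
  have := pos_INR n; nra.
have e_le : INR #|erased q n| <= INR ((1 + 2 ^ q) ^ n)%N - INR (2 ^ (n * q))%N.
  by have := le_INR _ _ (leP (card_erased q n)); rewrite plus_INR; lra.
rewrite (_ : r * INR n = r * INR n / 2 + r * INR n / 2); last field.
rewrite Rpower_plus -/t mult_INR.
have e_ge0 := pos_INR #|erased q n|; have S_ge0 := pos_INR (#|A| * #|B|).
rewrite mult_INR in S_ge0.
case: (leqP M1 M2) size => [le12 | lt21] /leP /le_INR size;
  rewrite !(plus_INR, mult_INR) in size.
- apply: (square_loss (m := INR M1) (M := INR M2) (e := INR #|erased q n|)) => //.
  by split; [apply: pos_INR | apply: le_INR; apply/leP].
- apply: (square_loss (m := INR M2) (M := INR M1) (e := INR #|erased q n|)) => //; try lra.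
  by split; [apply: pos_INR | apply: le_INR; apply/leP; apply: ltnW].
Qed.
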